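(* Assume $|k|>r$, the characteristic of $k$ does not divide $r$, and $k$ contains a primitive $r$-th root of unity. Let $e,e'\in k\Sigma_r$ be Lie idempotents. Then $(k\mathrm{GL}_n(k),L^{n,r},ek\Sigma_re)$ satisfies Schur-Weyl duality if and only if $(k\mathrm{GL}_n(k),L^{n,r},e'k\Sigma_re')$ does.
   Context: $T^{n,r}=(k^n)^{\otimes r}$ with $\mathrm{GL}_n(k)$ acting on the left diagonally and $\Sigma_r$ on the right by place permutation $(v_1\otimes\cdots\otimes v_r)\cdot\sigma=v_{\sigma(1)}\otimes\cdots\otimes v_{\sigma(r)}$. $L^{n,r}=L(k^n)\cap T^{n,r}$, where $L(k^n)$ is the Lie subalgebra of the tensor algebra of $k^n$ generated by $k^n$ under $[a,b]=ab-ba$. A Lie idempotent is an idempotent $e\in k\Sigma_r$ with $L^{n,r}=T^{n,r}e$. A triple $(A,V,B)$ with $V$ an $(A,B)$-bimodule satisfies Schur-Weyl duality if the image of $A$ in $\operatorname{End}_k(V)$ equals $\operatorname{End}_B(V)$ and the image of $B$ equals $\operatorname{End}_A(V)$. *)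

From HB Require Import structures.
From mathcomp Require Import all_boot all_order all_algebra all_fingroup.
Set Implicit Arguments.
Unset Strict Implicit.
Unset Printing Implicit Defensive.
Import GRing.Theory.
Local Open Scope ring_scope.

Section SchurWeylDefs.
Variables (k : fieldType) (n r : nat).

(* Basis of T^{n,r} = (k^n)^{(x) r}: words w = (w_1,...,w_r) with letters in
   {0..n-1}; e_w = e_{w_1} (x) ... (x) e_{w_r}.  A tensor is its coordinate
   function. *)
Definition Word := (r.-tuple 'I_n)%type.
Definition Tnr := {ffun Word -> k}.
Definition scaleT (a : k) (t : Tnr) : Tnr := [ffun w => a * t w].

(* Place permutation: e_w . s = e_{w o s}, i.e. (t . s)(u) = t (u o s^-1). *)
Definition place (s : 'S_r) (t : Tnr) : Tnr :=
  [ffun u : Word => t [tuple tnth u ((s^-1)%g i) | i < r]].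

(* Group algebra k Sigma_r, with the product of Sigma_r being composition
   (s t)(i) = s (t i), so that place permutation is a right action.
   (mathcomp's (t * s)%g is "first t, then s" = s o t.) *)
Definition KS := {ffun 'S_r -> k}.
Definition scomp (s t : 'S_r) : 'S_r := (t * s)%g.
Definition KSmul (a b : KS) : KS :=
  [ffun p => \sum_(s : 'S_r) \sum_(t : 'S_r) if scomp s t == p then a s * b t else 0].
Definition ract (a : KS) (t : Tnr) : Tnr := \sum_(s : 'S_r) scaleT (a s) (place s t).

(* Diagonal left action of GL_n(k): g . e_w = (g e_{w_1}) (x) ... (x) (g e_{w_r}). *)
Definition glact (g : 'M[k]_n) (t : Tnr) : Tnr :=
  [ffun u : Word => \sum_(w : Word) (\prod_(i < r) g (tnth u i) (tnth w i)) * t w].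
Definition GLel := {g : 'M[k]_n | g \in unitmx}.
(* Elements of the group algebra k GL_n(k): finite formal combinations. *)
Definition kGL := seq (k * GLel).
Definition kGLact (a : kGL) (t : Tnr) : Tnr :=
  \sum_(p <- a) scaleT p.1 (glact (val p.2) t).

(* (Completed) tensor algebra of k^n: coordinate functions on all words;
   the Lie subalgebra generated by k^n only contains finite sums. *)
Definition TA := seq 'I_n -> k.
Definition TAadd (f g : TA) : TA := fun w => f w + g w.
Definition TAscale (a : k) (f : TA) : TA := fun w => a * f w.
Definition TAmul (f g : TA) : TA :=
  fun w => \sum_(i < (size w).+1) f (take i w) * g (drop i w).
Definition TAbr (f g : TA) : TA := fun w => TAmul f g w - TAmul g f w.
Definition inVn (v : TA) : Prop := forall w, size w != 1%N -> v w = 0.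
Inductive inLie : TA -> Prop :=
| Lie_gen v : inVn v -> inLie v
| Lie_add f g : inLie f -> inLie g -> inLie (TAadd f g)
| Lie_scale a f : inLie f -> inLie (TAscale a f)
| Lie_br f g : inLie f -> inLie g -> inLie (TAbr f g).

(* T^{n,r} as the degree-r part of the tensor algebra. *)
Definition embedT (t : Tnr) : TA :=
  fun w => if (insub w : option Word) is Some u then t u else 0.
Definition Lnr (t : Tnr) : Prop := inLie (embedT t).

Definition Lie_idempotent (e : KS) : Prop :=
  KSmul e e = e /\ (forall t, Lnr t <-> exists t', t = ract e t').

(* e k Sigma_r e acting on the right: elements e a e, a in k Sigma_r. *)
Definition eKSe_act (e : KS) (a : KS) (t : Tnr) : Tnr := ract (KSmul (KSmul e a) e) t.

(* k-linear endomorphisms of a subspace V (given as a predicate), identified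
   when they agree on V. *)
Definition endoOn (V : Tnr -> Prop) (f : Tnr -> Tnr) : Prop :=
  (forall v, V v -> V (f v)) /\
  (forall a u v, V u -> V v -> f (scaleT a u + v) = scaleT a (f u) + f v).
Definition eqOn (V : Tnr -> Prop) (f g : Tnr -> Tnr) : Prop :=
  forall v, V v -> f v = g v.

(* Schur-Weyl duality for (A, V, B), A acting through actA, B through actB:
   image of A in End_k(V) = End_B(V), image of B in End_k(V) = End_A(V). *)
Definition SchurWeyl (V : Tnr -> Prop) (A B : Type)
  (actA : A -> Tnr -> Tnr) (actB : B -> Tnr -> Tnr) : Prop :=
  (forall f, endoOn V f ->
     ((exists a, eqOn V f (actA a)) <->
      (forall b, eqOn V (fun x => f (actB b x)) (fun x => actB b (f x))))) /\
  (forall f, endoOn V f ->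
     ((exists b, eqOn V f (actB b)) <->
      (forall a, eqOn V (fun x => f (actA a x)) (fun x => actA a (f x))))).

End SchurWeylDefs.

From Pilot Require Import Defs.
From HB Require Import structures.
From mathcomp Require Import all_boot all_order all_algebra all_fingroup.
Import GRing.Theory.
Local Open Scope ring_scope.

(* A Lie idempotent e fixes L^{n,r} pointwise and maps T^{n,r} onto it, so on
   L^{n,r} the element e a e acts as "a, then e".  The same operator is
   realised by e' (a e) e', because e' fixes the result.  Hence e k\Sigma_r e
   and e' k\Sigma_r e' have the same image in End_k(L^{n,r}), and Schur-Weyl
   duality only depends on that image. *)

Lemma SchurWeyl_transfer (k : fieldType) (n r : nat) (V : Tnr k n r -> Prop)
    (A B1 B2 : Type) (actA : A -> Tnr k n r -> Tnr k n r)
    (act1 : B1 -> Tnr k n r -> Tnr k n r) (act2 : B2 -> Tnr k n r -> Tnr k n r) :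
  (forall b1, exists b2, eqOn V (act1 b1) (act2 b2)) ->
  (forall b2, exists b1, eqOn V (act2 b2) (act1 b1)) ->
  SchurWeyl V actA act1 -> SchurWeyl V actA act2.
Proof.
move=> im12 im21 [SW1 SW2]; split=> f endo_f.
- split.
  + move=> fA b2 v Vv; have [b1 E] := im21 b2.
    have comm1 := (SW1 f endo_f).1 fA b1 v Vv.
    by rewrite /= (E v Vv) comm1 -(E (f v)) //; apply: endo_f.1.
  + move=> comm2; apply: (SW1 f endo_f).2 => b1 v Vv /=.
    have [b2 E] := im12 b1.
    by rewrite (E v Vv) (comm2 b2 v Vv) -(E (f v)) //; apply: endo_f.1.
- split.
  + move=> [b2 E2]; apply: (SW2 f endo_f).1.
    have [b1 E] := im21 b2; exists b1 => v Vv; by rewrite E2 // E.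
  + move=> commA; have [b1 E1] := (SW2 f endo_f).2 commA.
    have [b2 E] := im12 b1; exists b2 => v Vv; by rewrite E1 // E.
Qed.

Section RightAction.
Variables (k : fieldType) (n r : nat).
Implicit Types (a b e : KS k r) (t : Tnr k n r).

Lemma ractE a t u : Defs.ract a t u = \sum_(s : 'S_r) a s * place s t u.
Proof. by rewrite /Defs.ract sum_ffunE; apply: eq_bigr => s _; rewrite ffunE. Qed.

Lemma place_scomp (s s' : 'S_r) t : place s' (place s t) = place (scomp s s') t.
Proof.
apply/ffunP => u; rewrite !ffunE; congr (t _).
by apply: eq_from_tnth => i; rewrite !tnth_mktuple /scomp invMg permM.
Qed.

Lemma ract_KSmul a b t : Defs.ract (KSmul a b) t = Defs.ract b (Defs.ract a t).
Proof.
apply/ffunP => u; rewrite ractE.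
under eq_bigr => p _ do rewrite ffunE big_distrl /=.
rewrite exchange_big /= ractE.
under [RHS]eq_bigr => s' _ do rewrite ffunE ractE big_distrr /=.
rewrite [RHS]exchange_big /=; apply: eq_bigr => s _.
under eq_bigr => p _ do rewrite big_distrl /=.
rewrite exchange_big /=; apply: eq_bigr => s' _.
rewrite (bigD1 (scomp s s')) //= eqxx big1 ?addr0.
  by rewrite -place_scomp ffunE !mulrA [b s' * a s]mulrC.
by move=> p /negbTE neq_p; rewrite eq_sym neq_p mul0r.
Qed.

Lemma ract_Lie_idempotent_id e t :
  Lie_idempotent n e -> Lnr t -> Defs.ract e t = t.
Proof. by move=> [ee_e imL] /imL [t' ->]; rewrite -ract_KSmul ee_e. Qed.

Lemma Lnr_ract_Lie_idempotent e t : Lie_idempotent n e -> Lnr (Defs.ract e t).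
Proof. by move=> [_ imL]; apply/imL; exists t. Qed.

Lemma eKSe_actE e b t :
  Lie_idempotent n e -> Lnr t -> eKSe_act e b t = Defs.ract e (Defs.ract b t).
Proof.
by move=> Le Lt; rewrite /eKSe_act !ract_KSmul (ract_Lie_idempotent_id _ _ Le Lt).
Qed.

Lemma eKSe_act_change_idempotent e e' b :
  Lie_idempotent n e -> Lie_idempotent n e' ->
  eqOn (@Lnr k n r) (eKSe_act e b) (eKSe_act e' (KSmul b e)).
Proof.
move=> Le Le' t Lt; rewrite (eKSe_actE _ _ _ Le Lt) (eKSe_actE _ _ _ Le' Lt).
by rewrite ract_KSmul (ract_Lie_idempotent_id _ _ Le') //; apply: Lnr_ract_Lie_idempotent.
Qed.

End RightAction.

Theorem mainTheorem9 (k : fieldType) (n r : nat)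
  (hcard : exists s : seq k, uniq s /\ (r < size s)%N)
  (hchar : (r%:R : k) != 0)
  (hroot : exists z : k, r.-primitive_root z)
  (e e' : KS k r)
  (he : @Lie_idempotent k n r e) (he' : @Lie_idempotent k n r e') :
  SchurWeyl (@Lnr k n r) (@kGLact k n r) (@eKSe_act k n r e)
  <-> SchurWeyl (@Lnr k n r) (@kGLact k n r) (@eKSe_act k n r e').
Proof.
by split; apply: SchurWeyl_transfer => b; eexists;
  apply: eKSe_act_change_idempotent.
Qed.
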